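(* Let $(d_1,d_2)\in\mathbb{N}^2$. For each $s\in\mathbb{N}$, let $\chi_{d_1,d_2}(s)$ be the number of points $(m,n)\in\mathbb{Z}^2$ for which the conditions $$(m,n)=\sum_{k=1}^s\big(f(-i_k),f(-i_k-1)\big),\quad \sum_{k=1}^s f(i_k-2)\le d_1,\quad \sum_{k=1}^s f(i_k-1)\le d_2$$ admit a solution in integers $0\le i_1\le\dots\le i_s$, and $s$ is maximal with this property. Then $$\chi_{d_1,d_2}(s)=\begin{cases}2\min\{d_1,d_2,s,d_1+d_2-s\}+1 & \text{if } 0\le s\le d_1+d_2,\\ 0 & \text{if } s>d_1+d_2.\end{cases}$$ Equivalently, with $\mathbf d=(d_1,d_2)$, the set $\{\alpha\in E_{\mathbf d}:\ s_{\mathbf d}(\alpha)=s\}$ has exactly this cardinality.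
   Context: $\mathbb{N}=\{0,1,2,\dots\}$. Let $f\colon\mathbb{Z}\to\mathbb{Z}$ be defined by $f(0)=f(1)=1$ and $f(i+2)=f(i+1)+f(i)$ for all $i\in\mathbb{Z}$. Empty sums are $0$. Let $\gamma=(1+\sqrt5)/2$ and $\mathbb{Z}[\gamma]=\mathbb{Z}\oplus\mathbb{Z}\gamma^{-1}$; one has $\gamma^{-i}=f(-i)+f(-i-1)\gamma^{-1}$. For $\mathbf d=(d_1,d_2)\in\mathbb{N}^2$, $E_{\mathbf d}$ denotes the set of $\alpha\in\mathbb{Z}[\gamma]$ such that $\alpha=\sum_{k=1}^s\gamma^{-i_k}$, $\sum_{k=1}^s f(i_k-2)\le d_1$ and $\sum_{k=1}^s f(i_k-1)\le d_2$ for some $s\in\mathbb{N}$ and integers $0\le i_1\le\dots\le i_s$; for $\alpha\in E_{\mathbf d}$, $s_{\mathbf d}(\alpha)$ is the largest such $s$. *)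

From Stdlib Require Import ZArith Lia List Sorted.
Import ListNotations.
Open Scope Z_scope.

(* forward Fibonacci: fwd n = f(n) for n >= 0 *)
Fixpoint fwd_pair (n : nat) : Z * Z :=
  match n with
  | O => (1, 1)
  | S k => let (a, b) := fwd_pair k in (b, a + b)
  end.

(* backward: bwd_pair n = (f(-n), f(1-n)) *)
Fixpoint bwd_pair (n : nat) : Z * Z :=
  match n with
  | O => (1, 1)
  | S k => let (a, b) := bwd_pair k in (b - a, a)
  end.

(* f : Z -> Z with f 0 = f 1 = 1 and f (i+2) = f (i+1) + f i for all i. *)
Definition f (z : Z) : Z :=
  if (0 <=? z) then fst (fwd_pair (Z.to_nat z)) else fst (bwd_pair (Z.to_nat (- z))).

Lemma f_0 : f 0 = 1. Proof. reflexivity. Qed.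
Lemma f_1 : f 1 = 1. Proof. reflexivity. Qed.

Lemma fwd_rec (n : nat) : fst (fwd_pair (S (S n))) = fst (fwd_pair (S n)) + fst (fwd_pair n).
Proof.
  simpl. destruct (fwd_pair n) as [a b] eqn:E. simpl. lia.
Qed.

Lemma bwd_rec (n : nat) : fst (bwd_pair n) = fst (bwd_pair (S n)) + fst (bwd_pair (S (S n))).
Proof.
  simpl. destruct (bwd_pair n) as [a b] eqn:E. simpl. lia.
Qed.

Lemma fwd_bwd_snd (n : nat) : snd (fwd_pair n) = fst (fwd_pair (S n)).
Proof. simpl. destruct (fwd_pair n). reflexivity. Qed.

Lemma f_rec (i : Z) : f (i + 2) = f (i + 1) + f i.
Proof.
  unfold f.
  destruct (Z_lt_le_dec i (-2)) as [H|H].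
  - replace (Z.to_nat (- i)) with (S (S (Z.to_nat (- (i + 2))))) by lia.
    replace (Z.to_nat (- (i + 1))) with (S (Z.to_nat (- (i + 2)))) by lia.
    rewrite (proj2 (Z.leb_gt 0 (i+2)) ltac:(lia)),
            (proj2 (Z.leb_gt 0 (i+1)) ltac:(lia)),
            (proj2 (Z.leb_gt 0 i) ltac:(lia)).
    apply bwd_rec.
  - destruct (Z_le_gt_dec 0 i) as [H0|H0].
    + rewrite (proj2 (Z.leb_le 0 (i+2)) ltac:(lia)),
              (proj2 (Z.leb_le 0 (i+1)) ltac:(lia)),
              (proj2 (Z.leb_le 0 i) ltac:(lia)).
      replace (Z.to_nat (i + 2)) with (S (S (Z.to_nat i))) by lia.
      replace (Z.to_nat (i + 1)) with (S (Z.to_nat i)) by lia.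
      apply fwd_rec.
    + assert (i = -2 \/ i = -1) as [-> | ->] by lia; reflexivity.
Qed.

Definition zsum (l : list Z) : Z := fold_right Z.add 0 l.

Definition admits (d1 d2 : nat) (s : nat) (m n : Z) : Prop :=
  exists is : list nat,
    length is = s /\
    Sorted Nat.le is /\
    m = zsum (map (fun i => f (- Z.of_nat i)) is) /\
    n = zsum (map (fun i => f (- Z.of_nat i - 1)) is) /\
    zsum (map (fun i => f (Z.of_nat i - 2)) is) <= Z.of_nat d1 /\
    zsum (map (fun i => f (Z.of_nat i - 1)) is) <= Z.of_nat d2.

Definition max_admits (d1 d2 s : nat) (p : Z * Z) : Prop :=
  admits d1 d2 s (fst p) (snd p) /\
  forall s', admits d1 d2 s' (fst p) (snd p) -> (s' <= s)%nat.

Definition has_card {A : Type} (P : A -> Prop) (c : nat) : Prop :=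
  exists l : list A, NoDup l /\ (forall p, In p l <-> P p) /\ length l = c.

Definition chi_formula (d1 d2 s : nat) : nat :=
  if (s <=? d1 + d2)%nat
  then (2 * Nat.min (Nat.min d1 d2) (Nat.min s (d1 + d2 - s)) + 1)%nat
  else 0%nat.

(* Index [i] contributes the value [γ^(-i) = (f(-i), f(-i-1))] and the
   cost [(f(i-2), f(i-1))]; a multiset of indices is admissible when its cost
   lies in the box [[0, d1] x [0, d2]].

   1. Normalisation.  Two indices [m] and [m + t] with [t >= 3] can be
      replaced by the multiset [m + Mt t] of the same value, no larger cost
      and at least as many indices.  Iterating, every nonempty multiset is
      replaced by a proper window [{k^a, (k+1)^b, (k+2)^c}], [a >= 1]
      ([normalize]).
   2. Rigidity.  Along the ascending sequence [γ^j α] of a value [α], a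
      window of level [k] is read off at step [k]; hence a value has at most
      one window of each size, and a window with more indices costs at least
      as much as a smaller one with one index split ([more_indices_cost_more]).
      So the points counted by [χ(s)] are [0] (when [s = 0]) and the values of
      the maximal windows of size [s]: within the box, but not after one split
      ([max_admits_window]).
   3. Counting.  The maximal windows number the windows with cost in the box
      minus those whose split has cost in the box.  Fibre by fibre, the
      difference is an explicit indicator ([fibre_difference]), obtained by
      peeling off one level at a time, and its sum over the box is
      [χ(s) - [s = 0]] ([box_excess]). *)

From Stdlib Require Import ZArith Lia List Sorted Permutation Arith.
Import ListNotations.
Open Scope bool_scope.
Open Scope Z_scope.

(* [down] is multiplication by [γ⁻¹] in the coordinates [(x, y) ↦ x + y γ⁻¹]
   of [ℤ[γ]] (as [γ⁻² = 1 - γ⁻¹]); [up] is the Fibonacci step carrying the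
   cost [(f(i-2), f(i-1))] of an index to that of the next index. *)
Definition up (p : Z * Z) : Z * Z := (snd p, fst p + snd p).
Definition down (p : Z * Z) : Z * Z := (snd p, fst p - snd p).

Definition undown (p : Z * Z) : Z * Z := (fst p + snd p, fst p).
Definition unup (p : Z * Z) : Z * Z := (snd p - fst p, fst p).

(* Costs [(f(i-2), f(i-1))] and values [(f(-i), f(-i-1))] of the index [i],
   computed as orbits of [(1, 0)]. *)
Definition costA (i : nat) : Z := fst (Nat.iter i up (1, 0)).
Definition costB (i : nat) : Z := snd (Nat.iter i up (1, 0)).
Definition valA (i : nat) : Z := fst (Nat.iter i down (1, 0)).
Definition valB (i : nat) : Z := snd (Nat.iter i down (1, 0)).

Lemma costA_S i : costA (S i) = costB i. Proof. reflexivity. Qed.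
Lemma costB_S i : costB (S i) = costA i + costB i. Proof. reflexivity. Qed.
Lemma valA_S i : valA (S i) = valB i. Proof. reflexivity. Qed.
Lemma valB_S i : valB (S i) = valA i - valB i. Proof. reflexivity. Qed.

Lemma iter_up k x y : Nat.iter k up (x, y) =
  (x * costA k + y * costB k, x * costB k + y * (costA k + costB k)).
Proof.
  induction k as [|k IH]; [cbn; f_equal; ring|].
  rewrite Nat.iter_succ, IH, costA_S, costB_S. unfold up; cbn. f_equal; ring.
Qed.

Lemma iter_down k x y : Nat.iter k down (x, y) =
  (x * valA k + y * valB k, x * valB k + y * (valA k - valB k)).
Proof.
  induction k as [|k IH]; [cbn; f_equal; ring|].
  rewrite Nat.iter_succ, IH, valA_S, valB_S. unfold down; cbn. f_equal; ring.
Qed.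

Lemma undown_down p : undown (down p) = p.
Proof. destruct p as [x y]; unfold undown, down; cbn; f_equal; ring. Qed.

Lemma iter_undown_down k p : Nat.iter k undown (Nat.iter k down p) = p.
Proof.
  revert p; induction k as [|k IH]; intros p; [reflexivity|].
  rewrite Nat.iter_succ_r, Nat.iter_succ, undown_down. apply IH.
Qed.

Lemma cost_nonneg i : 0 <= costA i /\ 0 <= costB i.
Proof. induction i; [cbn; lia|]. rewrite costA_S, costB_S. lia. Qed.

Lemma cost_total_ge i : 1 <= costA i + costB i /\ Z.of_nat i <= costA i + costB i.
Proof.
  induction i as [i IH] using lt_wf_ind.
  destruct i as [|[|i]]; [cbn; lia|cbn; lia|].
  specialize (IH i ltac:(lia)) as IH0. specialize (IH (S i) ltac:(lia)) as IH1.
  clear IH. rewrite ?costB_S, ?costA_S, ?costB_S in *. pose proof (cost_nonneg i). lia.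
Qed.

Lemma f_cost i : f (Z.of_nat i - 2) = costA i /\ f (Z.of_nat i - 1) = costB i.
Proof.
  induction i as [|i [IHA IHB]]; [split; reflexivity|].
  rewrite costA_S, costB_S.
  replace (Z.of_nat (S i) - 2) with (Z.of_nat i - 1) by lia. split; [exact IHB|].
  replace (Z.of_nat (S i) - 1) with ((Z.of_nat i - 2) + 2) by lia.
  rewrite f_rec. replace (Z.of_nat i - 2 + 1) with (Z.of_nat i - 1) by lia. lia.
Qed.

Lemma f_value i : f (- Z.of_nat i) = valA i /\ f (- Z.of_nat i - 1) = valB i.
Proof.
  induction i as [|i [IHA IHB]]; [split; reflexivity|].
  rewrite valA_S, valB_S.
  replace (- Z.of_nat (S i)) with (- Z.of_nat i - 1) by lia. split; [exact IHB|].
  pose proof (f_rec (- Z.of_nat i - 2)) as E.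
  replace (- Z.of_nat i - 2 + 2) with (- Z.of_nat i) in E by lia.
  replace (- Z.of_nat i - 2 + 1) with (- Z.of_nat i - 1) in E by lia.
  replace (- Z.of_nat i - 1 - 1) with (- Z.of_nat i - 2) by lia. lia.
Qed.

Fixpoint lsum (g : nat -> Z) (R : list nat) : Z :=
  match R with [] => 0 | i :: R' => g i + lsum g R' end.

Definition value (R : list nat) : Z * Z := (lsum valA R, lsum valB R).
Definition cost (R : list nat) : Z * Z := (lsum costA R, lsum costB R).

Definition ple (p q : Z * Z) : Prop := fst p <= fst q /\ snd p <= snd q.

Lemma lsum_app g R1 R2 : lsum g (R1 ++ R2) = lsum g R1 + lsum g R2.
Proof. induction R1; cbn; lia. Qed.

Lemma lsum_repeat g i n : lsum g (repeat i n) = Z.of_nat n * g i.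
Proof. induction n; cbn [repeat lsum]; lia. Qed.

Lemma lsum_perm g R1 R2 : Permutation R1 R2 -> lsum g R1 = lsum g R2.
Proof. induction 1; cbn; lia. Qed.

Lemma zsum_map g R : zsum (map g R) = lsum g R.
Proof. induction R as [|i R IH]; [reflexivity|]. cbn. rewrite <- IH. reflexivity. Qed.

Lemma lsum_ext g1 g2 R : (forall i, g1 i = g2 i) -> lsum g1 R = lsum g2 R.
Proof. intros H; induction R; cbn; [lia|]. rewrite H; lia. Qed.

(* Addition formulas: [γ^(-j-i) = γ^(-j) γ^(-i)], and likewise for costs. *)
Lemma val_add j i : valA (j + i) = valA i * valA j + valB i * valB j /\
  valB (j + i) = valA i * valB j + valB i * (valA j - valB j).
Proof.
  assert (E : Nat.iter (j + i) down (1, 0) = Nat.iter j down (valA i, valB i))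
    by (rewrite Nat.iter_add; apply f_equal, surjective_pairing).
  rewrite (iter_down j) in E.
  unfold valA at 1 3, valB at 3. rewrite E. split; reflexivity.
Qed.

Lemma cost_add j i : costA (j + i) = costA i * costA j + costB i * costB j /\
  costB (j + i) = costA i * costB j + costB i * (costA j + costB j).
Proof.
  assert (E : Nat.iter (j + i) up (1, 0) = Nat.iter j up (costA i, costB i))
    by (rewrite Nat.iter_add; apply f_equal, surjective_pairing).
  rewrite (iter_up j) in E.
  unfold costA at 1 3, costB at 3. rewrite E. split; reflexivity.
Qed.

Lemma value_shift j R : value (map (Nat.add j) R) = Nat.iter j down (value R).
Proof.
  unfold value. rewrite iter_down.
  induction R as [|i R IH]; cbn [map lsum]; [f_equal; ring|].
  injection IH as IHA IHB. rewrite IHA, IHB, (proj1 (val_add j i)), (proj2 (val_add j i)).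
  f_equal; ring.
Qed.

Lemma cost_shift j R : cost (map (Nat.add j) R) = Nat.iter j up (cost R).
Proof.
  unfold cost. rewrite iter_up.
  induction R as [|i R IH]; cbn [map lsum]; [f_equal; ring|].
  injection IH as IHA IHB. rewrite IHA, IHB, (proj1 (cost_add j i)), (proj2 (cost_add j i)).
  f_equal; ring.
Qed.

Lemma admits_iff d1 d2 s m n : admits d1 d2 s m n <->
  exists R, length R = s /\ Sorted le R /\ value R = (m, n) /\
    ple (cost R) (Z.of_nat d1, Z.of_nat d2).
Proof.
  unfold admits, value, cost, ple; cbn [fst snd].
  assert (E : forall g h R, (forall i, g i = h i) -> zsum (map g R) = lsum h R)
    by (intros g h R H; rewrite zsum_map; apply lsum_ext, H).
  assert (EA := fun R => E _ valA R (fun i => proj1 (f_value i))).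
  assert (EB := fun R => E _ valB R (fun i => proj2 (f_value i))).
  assert (CA := fun R => E _ costA R (fun i => proj1 (f_cost i))).
  assert (CB := fun R => E _ costB R (fun i => proj2 (f_cost i))).
  split.
  - intros (R & H1 & H2 & H3 & H4 & H5 & H6). exists R.
    rewrite EA, EB, CA, CB in *. subst. repeat split; auto.
  - intros (R & H1 & H2 & H3 & H5 & H6). injection H3 as <- <-. exists R.
    rewrite EA, EB, CA, CB. repeat split; auto.
Qed.

(* A window [(k, a, b, c)] is the multiset with [a] copies of [k], [b]
   copies of [k+1] and [c] copies of [k+2]; it is proper when [a >= 1]. *)
Definition window : Type := (nat * nat * nat * nat)%type.

Definition wlist (w : window) : list nat :=
  let '(k, a, b, c) := w in repeat k a ++ repeat (S k) b ++ repeat (S (S k)) c.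
Definition wlevel (w : window) : nat := let '(k, _, _, _) := w in k.
Definition wsize (w : window) : nat := let '(_, a, b, c) := w in (a + b + c)%nat.

(* Value of a window, and its cost with the second coordinate of the base
   point raised by [δ]: [wcost 0] is the true cost, [wcost 2] the cost of
   the window obtained by splitting one index into two (see [window_split]). *)
Definition wvalue (w : window) : Z * Z :=
  let '(k, a, b, c) := w in
  Nat.iter k down (Z.of_nat (a + c), Z.of_nat b - Z.of_nat c).
Definition wcost (δ : Z) (w : window) : Z * Z :=
  let '(k, a, b, c) := w in
  Nat.iter k up (Z.of_nat (a + c), Z.of_nat (b + c) + δ).

Lemma wlist_value w : value (wlist w) = wvalue w.
Proof.
  destruct w as [[[k a] b] c]. unfold value, wlist, wvalue.
  rewrite !lsum_app, !lsum_repeat, iter_down, !valA_S, !valB_S, !valA_S. f_equal; lia.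
Qed.

Lemma wlist_cost w : cost (wlist w) = wcost 0 w.
Proof.
  destruct w as [[[k a] b] c]. unfold cost, wlist, wcost.
  rewrite !lsum_app, !lsum_repeat, iter_up, !costA_S, !costB_S, !costA_S. f_equal; lia.
Qed.

Lemma wlist_length w : length (wlist w) = wsize w.
Proof. destruct w as [[[k a] b] c]. cbn. rewrite !length_app, !repeat_length. lia. Qed.

Lemma Sorted_cons_le x l :
  Sorted le l -> (forall y, In y l -> (x <= y)%nat) -> Sorted le (x :: l).
Proof.
  intros H1 H2. constructor; [exact H1|]. destruct l; constructor. apply H2. left; reflexivity.
Qed.

Lemma Sorted_repeat_app x n l :
  Sorted le l -> (forall y, In y l -> (x <= y)%nat) -> Sorted le (repeat x n ++ l).
Proof.
  intros H1 H2. induction n as [|n IH]; [exact H1|].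
  apply Sorted_cons_le; [exact IH|]. intros y Hy. apply in_app_iff in Hy as [Hy|Hy].
  - apply repeat_spec in Hy. lia.
  - apply H2, Hy.
Qed.

Lemma wlist_sorted w : Sorted le (wlist w).
Proof.
  destruct w as [[[k a] b] c]. cbn.
  apply Sorted_repeat_app; [apply Sorted_repeat_app|].
  - rewrite <- app_nil_r. apply Sorted_repeat_app; [constructor|intros y []].
  - intros y Hy. apply repeat_spec in Hy. lia.
  - intros y Hy. apply in_app_iff in Hy as [Hy|Hy]; apply repeat_spec in Hy; lia.
Qed.

Lemma wcost_delta δ k a b c :
  wcost δ (k, a, b, c) = (fst (wcost 0 (k, a, b, c)) + δ * costB k,
                          snd (wcost 0 (k, a, b, c)) + δ * (costA k + costB k)).
Proof. cbn. rewrite !iter_up. cbn. f_equal; ring. Qed.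

Lemma exists_min (R : list nat) : R <> [] ->
  exists m, In m R /\ forall y, In y R -> (m <= y)%nat.
Proof.
  induction R as [|x R IH]; intros HR; [congruence|].
  destruct R as [|z R'].
  - exists x. split; [left; reflexivity|]. intros y [<-|[]]; lia.
  - destruct (IH ltac:(discriminate)) as (m & Hm & Hle).
    exists (Nat.min x m). split.
    + destruct (Nat.min_spec x m) as [[_ ->]|[_ ->]]; [left; reflexivity|right; exact Hm].
    + intros y [<-|Hy]; [lia|]. specialize (Hle y Hy). lia.
Qed.

Lemma exists_max (R : list nat) : R <> [] ->
  exists m, In m R /\ forall y, In y R -> (y <= m)%nat.
Proof.
  induction R as [|x R IH]; intros HR; [congruence|].
  destruct R as [|z R'].
  - exists x. split; [left; reflexivity|]. intros y [<-|[]]; lia.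
  - destruct (IH ltac:(discriminate)) as (m & Hm & Hle).
    exists (Nat.max x m). split.
    + destruct (Nat.max_spec x m) as [[_ ->]|[_ ->]]; [right; exact Hm|left; reflexivity].
    + intros y [<-|Hy]; [lia|]. specialize (Hle y Hy). lia.
Qed.

Lemma perm_window k R : (forall y, In y R -> (k <= y <= S (S k))%nat) ->
  Permutation R (wlist (k, count_occ Nat.eq_dec R k, count_occ Nat.eq_dec R (S k),
                        count_occ Nat.eq_dec R (S (S k)))).
Proof.
  induction R as [|x R IH]; intros H; [constructor|].
  specialize (IH (fun y Hy => H y (or_intror Hy))). specialize (H x (or_introl eq_refl)).
  cbn [wlist count_occ] in *.
  destruct (Nat.eq_dec x k) as [->|N0];
    [|destruct (Nat.eq_dec x (S k)) as [->|N1];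
      [|destruct (Nat.eq_dec x (S (S k))) as [->|N2]; [|lia]]];
    repeat (destruct Nat.eq_dec; [lia|]); repeat (destruct Nat.eq_dec; [|lia]).
  - cbn. constructor. exact IH.
  - cbn [repeat]. apply Permutation_cons_app, IH.
  - cbn [repeat]. rewrite app_assoc. apply Permutation_cons_app. rewrite <- app_assoc. exact IH.
Qed.

Fixpoint Mt (t : nat) : list nat :=
  match t with
  | O | S O | S (S O) => []
  | S (S (S O)) => [1; 1]%nat
  | S (S t'' as t') => if Nat.even t then (2 :: map S (Mt t'))%nat
                       else (1 :: map (Nat.add 2) (Mt t''))%nat
  end.

Lemma Mt_even u : (3 <= u)%nat -> Nat.even (S u) = true -> Mt (S u) = (2 :: map S (Mt u))%nat.
Proof. intros H E. destruct u as [|[|[|u]]]; try lia. cbn - [Nat.even]. rewrite E. reflexivity. Qed.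

Lemma Mt_odd u : (3 <= u)%nat -> Nat.even (S (S u)) = false ->
  Mt (S (S u)) = (1 :: map (Nat.add 2) (Mt u))%nat.
Proof. intros H E. destruct u as [|[|[|u]]]; try lia. cbn - [Nat.even]. rewrite E. reflexivity. Qed.

Definition odd_defect (t : nat) : Z := if Nat.odd t then 2 else 0.

Lemma value_cons i R : value (i :: R) = (valA i + fst (value R), valB i + snd (value R)).
Proof. reflexivity. Qed.

Lemma cost_cons i R : cost (i :: R) = (costA i + fst (cost R), costB i + snd (cost R)).
Proof. reflexivity. Qed.

Lemma Mt_spec t : (3 <= t)%nat ->
  value (Mt t) = (1 + valA t, valB t) /\
  cost (Mt t) = (1 + costA t - odd_defect t, costB t) /\
  (2 <= length (Mt t))%nat /\ ((4 <= t)%nat -> (3 <= length (Mt t))%nat).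
Proof.
  induction t as [t IH] using lt_wf_ind. intros Ht.
  destruct (Nat.eq_dec t 3) as [->|Ht3]; [repeat split; cbn; lia|].
  unfold odd_defect. rewrite <- Nat.negb_even.
  destruct (Nat.even t) eqn:E.
  -
    destruct t as [|u]; [lia|]. rewrite Mt_even by (auto; lia).
    destruct (IH u ltac:(lia) ltac:(lia)) as (V & C & L & _).
    unfold odd_defect in C. rewrite Nat.even_succ in E. rewrite E in C.
    assert (V1 : value (map S (Mt u)) = down (value (Mt u))) by exact (value_shift 1 _).
    assert (C1 : cost (map S (Mt u)) = up (cost (Mt u))) by exact (cost_shift 1 _).
    rewrite value_cons, cost_cons, V1, C1, V, C. unfold down, up. cbn [fst snd length].
    rewrite length_map, (valA_S u), (valB_S u), (costA_S u), (costB_S u). cbn [negb].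
    change (valA 2) with 1. change (valB 2) with (-1).
    change (costA 2) with 1. change (costB 2) with 1.
    repeat split; try f_equal; lia.
  -
    destruct t as [|[|u]]; [lia|lia|]. rewrite Mt_odd by (auto; destruct u as [|[|[|]]]; cbn in E; lia).
    destruct (IH u ltac:(lia) ltac:(destruct u as [|[|[|]]]; cbn in E; lia)) as (V & C & L & _).
    unfold odd_defect in C. rewrite Nat.even_succ_succ in E.
    rewrite <- Nat.negb_even, E in C.
    assert (V2 : value (map (Nat.add 2) (Mt u)) = down (down (value (Mt u))))
      by exact (value_shift 2 _).
    assert (C2 : cost (map (Nat.add 2) (Mt u)) = up (up (cost (Mt u))))
      by exact (cost_shift 2 _).
    rewrite value_cons, cost_cons, V2, C2, V, C. unfold down, up. cbn [fst snd length].
    rewrite length_map, (valA_S (S u)), (valB_S (S u)), (costA_S (S u)), (costB_S (S u)).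
    rewrite (valA_S u), (valB_S u), (costA_S u), (costB_S u). cbn [negb].
    change (valA 1) with 0. change (valB 1) with 1.
    change (costA 1) with 0. change (costB 1) with 1.
    repeat split; try f_equal; lia.
Qed.

Lemma value_app R1 R2 :
  value (R1 ++ R2) = (fst (value R1) + fst (value R2), snd (value R1) + snd (value R2)).
Proof. unfold value. cbn. rewrite !lsum_app. reflexivity. Qed.

Lemma cost_app R1 R2 :
  cost (R1 ++ R2) = (fst (cost R1) + fst (cost R2), snd (cost R1) + snd (cost R2)).
Proof. unfold cost. cbn. rewrite !lsum_app. reflexivity. Qed.

Lemma value_perm R1 R2 : Permutation R1 R2 -> value R1 = value R2.
Proof. intros P. unfold value. rewrite !(lsum_perm _ _ _ P). reflexivity. Qed.

Lemma cost_perm R1 R2 : Permutation R1 R2 -> cost R1 = cost R2.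
Proof. intros P. unfold cost. rewrite !(lsum_perm _ _ _ P). reflexivity. Qed.

Lemma cost_nonneg_sum R : 0 <= fst (cost R) /\ 0 <= snd (cost R).
Proof.
  induction R as [|i R IH]; [cbn; lia|].
  rewrite cost_cons. pose proof (cost_nonneg i). cbn [fst snd]. lia.
Qed.

Lemma length_le_cost R : Z.of_nat (length R) <= fst (cost R) + snd (cost R).
Proof.
  induction R as [|i R IH]; [cbn; lia|]. rewrite cost_cons. pose proof (cost_total_ge i).
  cbn [length fst snd]. lia.
Qed.

Lemma ple_trans p q r : ple p q -> ple q r -> ple p r.
Proof. unfold ple. lia. Qed.

(* Termination measure of the normalisation: twice the total cost minus the
   number of indices. *)
Definition measure (R : list nat) : Z :=
  2 * (fst (cost R) + snd (cost R)) - Z.of_nat (length R).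

Lemma replace_pair m t rest : (3 <= t)%nat ->
  let R := (m :: (m + t) :: rest)%nat in
  let R' := map (Nat.add m) (Mt t) ++ rest in
  value R' = value R /\ ple (cost R') (cost R) /\
  (length R <= length R')%nat /\ measure R' < measure R.
Proof.
  intros Ht R R'. destruct (Mt_spec t Ht) as (V & C & L2 & L3).
  assert (VS := value_shift m (Mt t)). assert (CS := cost_shift m (Mt t)).
  rewrite V, iter_down in VS. rewrite C, iter_up in CS.
  destruct (val_add m t) as [VA VB]. destruct (cost_add m t) as [CA CB].
  pose proof (cost_nonneg m) as Cm. pose proof (cost_total_ge m) as Tm.
  assert (Ho : odd_defect t = 0 /\ (4 <= t)%nat \/ odd_defect t = 2).
  { unfold odd_defect. destruct (Nat.odd t) eqn:Od; [now right|left; split; [reflexivity|]].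
    destruct (Nat.eq_dec t 3) as [->|]; [discriminate|lia]. }
  unfold R, R', measure, ple.
  rewrite value_app, cost_app, VS, CS, !value_cons, !cost_cons, length_app, length_map.
  cbn [length fst snd value cost lsum]. unfold value, cost in *. cbn [fst snd] in *.
  rewrite VA, VB, CA, CB.
  destruct Ho as [[-> H4] | ->]; [specialize (L3 H4)|]; repeat split; try f_equal; nia.
Qed.

Lemma normalize R : R <> [] ->
  exists k a b c, (1 <= a)%nat /\ wvalue (k, a, b, c) = value R /\
    (length R <= a + b + c)%nat /\ ple (wcost 0 (k, a, b, c)) (cost R).
Proof.
  remember (Z.to_nat (measure R)) as n eqn:Hn.
  revert R Hn. induction n as [n IH] using lt_wf_ind. intros R Hn HR.
  destruct (exists_min R HR) as (m & Hm & Hmin).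
  destruct (exists_max R HR) as (M & HM & Hmax).
  destruct (le_lt_dec M (S (S m))) as [Hw|Hg].
  - (* all indices lie in [{m, m+1, m+2}]: [R] is a window *)
    assert (P := perm_window m R (fun y Hy => conj (Hmin y Hy) (Nat.le_trans _ _ _ (Hmax y Hy) Hw))).
    exists m, (count_occ Nat.eq_dec R m), (count_occ Nat.eq_dec R (S m)),
      (count_occ Nat.eq_dec R (S (S m))).
    split; [apply (count_occ_In Nat.eq_dec) in Hm; lia|].
    rewrite <- wlist_value, <- wlist_cost, (value_perm _ _ P), (cost_perm _ _ P).
    rewrite (Permutation_length P), wlist_length. unfold ple. repeat split; cbn; lia.
  - (* the extreme indices are at distance at least 3: apply [replace_pair] *)
    apply in_split in Hm as (l1 & l2 & ->).
    assert (HM' : In M (l1 ++ l2)).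
    { apply in_app_iff in HM as [HM|[HM|HM]]; apply in_app_iff; auto; lia. }
    apply in_split in HM' as (l3 & l4 & E).
    set (rest := l3 ++ l4).
    assert (P : Permutation (l1 ++ m :: l2) (m :: (m + (M - m)) :: rest)%nat).
    { replace (m + (M - m))%nat with M by lia.
      eapply perm_trans; [apply Permutation_sym, Permutation_middle|].
      constructor. rewrite E. apply Permutation_sym, Permutation_middle. }
    destruct (replace_pair m (M - m) rest ltac:(lia)) as (V & C & L & Me).
    set (R' := map (Nat.add m) (Mt (M - m)) ++ rest) in *.
    assert (HR' : R' <> []).
    { intros E'. rewrite E' in L. cbn in L. lia. }
    assert (Hlt : (Z.to_nat (measure R') < n)%nat).
    { pose proof (length_le_cost R'). rewrite Hn.
      unfold measure in *. rewrite (cost_perm _ _ P), (Permutation_length P). lia. }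
    destruct (IH _ Hlt R' eq_refl HR')
      as (k & a & b & c & Ha & V' & L' & C').
    exists k, a, b, c. split; [exact Ha|].
    rewrite (value_perm _ _ P), (cost_perm _ _ P), (Permutation_length P), <- V.
    split; [exact V'|split; [lia|eapply ple_trans; eassumption]].
Qed.

(* The ascending sequence of a value [α]: [ascend α j = γ^j α] in the
   coordinates of [ℤ[γ]].  A proper window of level [k] is read off from
   [ascend α k = (a + c, b - c)], which makes windows rigid. *)
Definition ascend (al : Z * Z) (j : nat) : Z * Z := Nat.iter j undown al.

Lemma ascend_S al j :
  ascend al (S j) = (fst (ascend al j) + snd (ascend al j), fst (ascend al j)).
Proof. unfold ascend. rewrite Nat.iter_succ. reflexivity. Qed.

Lemma ascend_window k a b c :
  ascend (wvalue (k, a, b, c)) k = (Z.of_nat (a + c), Z.of_nat b - Z.of_nat c).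
Proof. apply iter_undown_down. Qed.

Lemma ascend_growth al j : 1 <= fst (ascend al j) -> 1 <= fst (ascend al (S j)) ->
  forall d, 1 <= fst (ascend al (j + d)) /\ 1 <= fst (ascend al (S (j + d))) /\
            fst (ascend al (S j)) <= fst (ascend al (S (j + d))).
Proof.
  intros H0 H1 d. induction d as [|d (I0 & I1 & I2)]; [rewrite Nat.add_0_r; lia|].
  rewrite Nat.add_succ_r, (ascend_S al (S (j + d))). cbn [fst snd].
  rewrite (ascend_S al (j + d)) in I1, I2 |- *. cbn [fst snd] in *. lia.
Qed.

Lemma ascend_window_pos k a b c : (1 <= a)%nat ->
  1 <= fst (ascend (wvalue (k, a, b, c)) k) /\
  1 <= fst (ascend (wvalue (k, a, b, c)) (S k)).
Proof. intros Ha. rewrite ascend_S, ascend_window. cbn. lia. Qed.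

Lemma level_lt k a b c k' a' b' c' : (1 <= a)%nat -> (1 <= a')%nat ->
  wvalue (k, a, b, c) = wvalue (k', a', b', c') -> (k' < k)%nat ->
  (a' + b' + c' < a + b + c)%nat.
Proof.
  intros Ha Ha' E Hk. set (al := wvalue (k, a, b, c)).
  assert (W := ascend_window k a b c). assert (W' := ascend_window k' a' b' c').
  rewrite <- E in W'. fold al in W, W'.
  assert (S1 := ascend_S al k). assert (S1' := ascend_S al k').
  assert (S2' := ascend_S al (S k')).
  rewrite W in S1. rewrite W' in S1'. rewrite S1' in S2'. cbn [fst snd] in S1, S1', S2'.
  assert (P1 : 1 <= fst (ascend al (S k'))) by (rewrite S1'; cbn; lia).
  assert (P2 : 1 <= fst (ascend al (S (S k')))) by (rewrite S2'; cbn; lia).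
  destruct (ascend_growth al (S k') P1 P2 (k - S k')) as (_ & _ & G).
  replace (S (S k' + (k - S k'))) with (S k) in G by lia.
  rewrite S1, S2' in G. cbn in G. lia.
Qed.

Lemma window_unique k a b c k' a' b' c' : (1 <= a)%nat -> (1 <= a')%nat ->
  wvalue (k, a, b, c) = wvalue (k', a', b', c') -> (a + b + c = a' + b' + c')%nat ->
  k = k' /\ a = a' /\ b = b' /\ c = c'.
Proof.
  intros Ha Ha' E Hs. destruct (lt_eq_lt_dec k k') as [[H|<-]|H].
  - pose proof (level_lt k' a' b' c' k a b c Ha' Ha (eq_sym E) H). lia.
  - assert (W := ascend_window k a b c). rewrite E, ascend_window in W.
    injection W. lia.
  - pose proof (level_lt k a b c k' a' b' c' Ha Ha' E H). lia.
Qed.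

(* [up^k] is monotone, its matrix having nonnegative entries. *)
Lemma iter_up_mono k x y x' y' : x <= x' -> y <= y' ->
  ple (Nat.iter k up (x, y)) (Nat.iter k up (x', y')).
Proof. intros. rewrite !iter_up. unfold ple; cbn. pose proof (cost_nonneg k). nia. Qed.

Lemma ascend_cost_step al j : 0 <= fst (ascend al j) ->
  ple (Nat.iter j up (ascend al j)) (Nat.iter (S j) up (ascend al (S j))).
Proof.
  intros H. rewrite Nat.iter_succ_r, ascend_S.
  destruct (ascend al j) as [x y]. cbn [fst snd] in *. unfold up; cbn [fst snd].
  apply iter_up_mono; lia.
Qed.

Lemma more_indices_cost_more k a b c k' a' b' c' : (1 <= a)%nat -> (1 <= a')%nat ->
  wvalue (k, a, b, c) = wvalue (k', a', b', c') -> (a + b + c < a' + b' + c')%nat ->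
  ple (wcost 2 (k, a, b, c)) (wcost 0 (k', a', b', c')).
Proof.
  intros Ha Ha' E Hs. set (al := wvalue (k, a, b, c)).
  assert (W := ascend_window k a b c). assert (W' := ascend_window k' a' b' c').
  rewrite <- E in W'. fold al in W, W'.
  assert (Top : ple (Nat.iter k' up (ascend al k')) (wcost 0 (k', a', b', c'))).
  { rewrite W'. apply iter_up_mono; lia. }
  destruct (lt_eq_lt_dec k k') as [[Hk|<-]|Hk].
  - (* the costs along the ascending sequence increase from level [k+1] on *)
    destruct (ascend_window_pos k a b c Ha) as [P0 P1]. fold al in P0, P1.
    assert (Chain : forall d, ple (Nat.iter (S k) up (ascend al (S k)))
                                  (Nat.iter (S k + d) up (ascend al (S k + d)))).
    { induction d as [|d IH]; [rewrite Nat.add_0_r; unfold ple; lia|].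
      eapply ple_trans; [exact IH|]. rewrite Nat.add_succ_r.
      apply ascend_cost_step. destruct (ascend_growth al k P0 P1 (S d)) as (G & _).
      replace (k + S d)%nat with (S k + d)%nat in G by lia. lia. }
    specialize (Chain (k' - S k)%nat). replace (S k + (k' - S k))%nat with k' in Chain by lia.
    assert (Bot : ple (wcost 2 (k, a, b, c)) (Nat.iter (S k) up (ascend al (S k)))).
    { rewrite Nat.iter_succ_r, ascend_S, W. unfold up; cbn [fst snd wcost].
      apply iter_up_mono; lia. }
    eapply ple_trans; [exact Bot|]. eapply ple_trans; [exact Chain|exact Top].
  - rewrite W in W'. injection W' as E1 E2. cbn [wcost]. apply iter_up_mono; lia.
  - pose proof (level_lt k a b c k' a' b' c' Ha Ha' E Hk). lia.
Qed.

(* Splitting one index [k] of a proper window into [k+1] and [k+2]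
   ([γ^(-k) = γ^(-k-1) + γ^(-k-2)]) gives a proper window of the same value
   with one more index, whose cost is [wcost 2]. *)
Lemma window_split k a b c : (1 <= a)%nat ->
  exists k' a' b' c', (1 <= a')%nat /\ wvalue (k', a', b', c') = wvalue (k, a, b, c) /\
    (a' + b' + c' = S (a + b + c))%nat /\ wcost 0 (k', a', b', c') = wcost 2 (k, a, b, c).
Proof.
  intros Ha. destruct (Nat.eq_dec a 1) as [->|Ha2].
  - exists (S k), (S b), (S c), 0%nat. cbn [wvalue wcost]. rewrite !Nat.iter_succ_r.
    unfold down, up; cbn [fst snd]. repeat split; try lia; f_equal; f_equal; lia.
  - exists k, (a - 1)%nat, (S b), (S c). cbn [wvalue wcost].
    repeat split; try lia; f_equal; f_equal; lia.
Qed.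

Lemma value_nonzero R : R <> [] -> value R <> (0, 0).
Proof.
  intros HR E. destruct (normalize R HR) as (k & a & b & c & Ha & V & _).
  assert (W := ascend_window k a b c). rewrite V, E in W.
  assert (Z0 : forall j, ascend (0, 0) j = (0, 0)).
  { induction j as [|j IH]; [reflexivity|]. rewrite ascend_S, IH. reflexivity. }
  rewrite Z0 in W. injection W. lia.
Qed.

Section Box.
Variables d1 d2 : nat.

Definition D : Z * Z := (Z.of_nat d1, Z.of_nat d2).

Lemma admits_window s m n : admits d1 d2 s m n ->
  (s = 0%nat /\ (m, n) = (0, 0)) \/
  exists k a b c, (1 <= a)%nat /\ wvalue (k, a, b, c) = (m, n) /\
    (s <= a + b + c)%nat /\ ple (wcost 0 (k, a, b, c)) D.
Proof.
  intros H. apply admits_iff in H as (R & <- & _ & V & C).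
  destruct R as [|i R]; [left; split; [reflexivity|exact (eq_sym V)]|right].
  destruct (normalize (i :: R) ltac:(discriminate)) as (k & a & b & c & Ha & V' & L & C').
  exists k, a, b, c. repeat split; try congruence; try lia; eapply ple_trans; eauto.
Qed.

Lemma window_admits k a b c m n : wvalue (k, a, b, c) = (m, n) ->
  ple (wcost 0 (k, a, b, c)) D -> admits d1 d2 (a + b + c) m n.
Proof.
  intros V C. apply admits_iff. exists (wlist (k, a, b, c)).
  rewrite wlist_length, wlist_value, wlist_cost, V.
  split; [reflexivity|split; [apply wlist_sorted|split; [reflexivity|exact C]]].
Qed.

Definition maximal (s : nat) (w : window) : Prop :=
  let '(k, a, b, c) := w in
  (1 <= a)%nat /\ (a + b + c = s)%nat /\
  ple (wcost 0 w) D /\ ~ ple (wcost 2 w) D.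

Theorem max_admits_window s p : max_admits d1 d2 s p <->
  (s = 0%nat /\ p = (0, 0)) \/ exists w, maximal s w /\ wvalue w = p.
Proof.
  destruct p as [m n]. unfold max_admits. cbn [fst snd]. split.
  - intros [Hs Hmax].
    destruct (admits_window s m n Hs) as [Z|(k & a & b & c & Ha & V & L & C)]; [now left|right].
    assert (Hsize : (a + b + c <= s)%nat).
    { apply Hmax, (window_admits k a b c m n V C). }
    exists (k, a, b, c). split; [|exact V]. unfold maximal; cbv beta iota.
    repeat split; try lia; try apply C.
    intros C2. destruct (window_split k a b c Ha) as (k' & a' & b' & c' & _ & V' & S' & C').
    rewrite <- C' in C2. rewrite V in V'.
    specialize (Hmax _ (window_admits k' a' b' c' m n V' C2)). lia.
  - intros [[-> E]|([[[k a] b] c] & (Ha & Hs & C & NC) & V)].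
    + injection E as -> ->. split.
      * apply admits_iff. exists []. repeat split; [constructor|unfold ple; cbn; lia..].
      * intros s' Hs'. apply admits_iff in Hs' as (R & <- & _ & V & _).
        destruct R as [|i R]; [reflexivity|].
        exfalso. exact (value_nonzero (i :: R) ltac:(discriminate) V).
    + split; [rewrite <- Hs; exact (window_admits k a b c m n V C)|].
      intros s' Hs'. destruct (le_lt_dec s' s) as [Hl|Hl]; [exact Hl|exfalso].
      destruct (admits_window s' m n Hs') as [[-> _]|(k' & a' & b' & c' & Ha' & V' & L' & C')];
        [lia|].
      rewrite <- V' in V.
      apply NC. eapply ple_trans; [|exact C'].
      apply more_indices_cost_more; auto. lia.
Qed.

End Box.

Lemma NoDup_prod {A B : Type} (l1 : list A) (l2 : list B) :
  NoDup l1 -> NoDup l2 -> NoDup (list_prod l1 l2).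
Proof.
  intros H1 H2. induction H1 as [|x l1 Hx H1 IH]; cbn; [constructor|].
  apply NoDup_app; [|exact IH|].
  - apply NoDup_map_NoDup_ForallPairs; [|exact H2]. intros a b _ _ E. now injection E.
  - intros [p q] Hp Hq. apply in_map_iff in Hp as (y & E & _). injection E as <- <-.
    apply in_prod_iff in Hq. tauto.
Qed.

Lemma count_bij {A B : Type} (g : A -> B) (P : A -> bool) (Q : B -> bool)
  (l1 : list A) (l2 : list B) : NoDup l1 -> NoDup l2 ->
  (forall x y, In x l1 -> In y l1 -> P x = true -> P y = true -> g x = g y -> x = y) ->
  (forall x, In x l1 -> P x = true -> In (g x) l2 /\ Q (g x) = true) ->
  (forall y, In y l2 -> Q y = true -> exists x, In x l1 /\ P x = true /\ g x = y) ->
  length (filter P l1) = length (filter Q l2).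
Proof.
  intros N1 N2 Inj Fw Bw.
  rewrite <- (length_map g). apply Permutation_length, NoDup_Permutation.
  - apply NoDup_map_NoDup_ForallPairs; [|apply NoDup_filter, N1].
    intros x y Hx Hy. apply filter_In in Hx, Hy. apply Inj; tauto.
  - apply NoDup_filter, N2.
  - intros y. rewrite in_map_iff, filter_In. split.
    + intros (x & <- & Hx). apply filter_In in Hx. apply Fw; tauto.
    + intros [Hy Qy]. destruct (Bw y Hy Qy) as (x & Hx & Px & <-).
      exists x. rewrite filter_In. auto.
Qed.

Lemma count_one {A : Type} (P : A -> bool) (l : list A) (x0 : A) :
  NoDup l -> In x0 l -> P x0 = true -> (forall x, In x l -> P x = true -> x = x0) ->
  length (filter P l) = 1%nat.
Proof.
  intros N I Px U.
  change 1%nat with (length (filter (fun _ : A => true) [x0])).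
  apply (count_bij (fun x => x)); [exact N|repeat constructor; intros []| | |].
  - intros x y Hx Hy Px' Py' _. rewrite (U x Hx Px'), (U y Hy Py'). reflexivity.
  - intros x Hx Px'. rewrite (U x Hx Px'). cbn; auto.
  - intros y [<-|[]] _. exists x0. auto.
Qed.

Lemma count_zero {A : Type} (P : A -> bool) (l : list A) :
  (forall x, In x l -> P x = false) -> length (filter P l) = 0%nat.
Proof.
  intros H. induction l as [|x l IH]; [reflexivity|]. cbn.
  rewrite H by (left; reflexivity). apply IH. intros y Hy. apply H. right; exact Hy.
Qed.

Lemma count_split {A : Type} (P Q : A -> bool) (l : list A) :
  length (filter P l) = (length (filter (fun x => P x && Q x) l) +
                         length (filter (fun x => P x && negb (Q x)) l))%nat.
Proof. induction l as [|x l IH]; [reflexivity|]. cbn. destruct (P x), (Q x); cbn; lia. Qed.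

Lemma count_ext {A : Type} (P Q : A -> bool) (l : list A) :
  (forall x, In x l -> P x = Q x) -> length (filter P l) = length (filter Q l).
Proof. intros H. f_equal. apply filter_ext_in, H. Qed.

Lemma count_diff {A : Type} (P Q : A -> bool) (l : list A) :
  (forall x, In x l -> Q x = true -> P x = true) ->
  Z.of_nat (length (filter (fun x => P x && negb (Q x)) l)) =
  Z.of_nat (length (filter P l)) - Z.of_nat (length (filter Q l)).
Proof.
  intros H. rewrite (count_split P Q l).
  rewrite (count_ext (fun x => P x && Q x) Q); [lia|].
  intros x Hx. destruct (Q x) eqn:E; [rewrite (H x Hx E); reflexivity|apply Bool.andb_false_r].
Qed.

(* All windows with level and multiplicities bounded by [B]; proper windows
   whose cost has total at most [B] all belong to it ([wcost_bounds]). *)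
Definition universe (B : nat) : list window :=
  list_prod (list_prod (list_prod (seq 0 (S B)) (seq 1 B)) (seq 0 (S B))) (seq 0 (S B)).

Lemma universe_NoDup B : NoDup (universe B).
Proof. unfold universe. repeat apply NoDup_prod; apply seq_NoDup. Qed.

Lemma in_universe B k a b c :
  In (k, a, b, c) (universe B) <-> (k <= B /\ 1 <= a <= B /\ b <= B /\ c <= B)%nat.
Proof. unfold universe. rewrite !in_prod_iff, !in_seq. lia. Qed.

Lemma index_cost_le R x : In x R -> costA x + costB x <= fst (cost R) + snd (cost R).
Proof.
  induction R as [|i R IH]; [intros []|]. rewrite cost_cons. cbn [fst snd].
  pose proof (cost_nonneg i). pose proof (cost_nonneg_sum R).
  intros [->|Hx]; [lia|]. specialize (IH Hx). lia.
Qed.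

Lemma wcost_bounds δ k a b c : 0 <= δ -> (1 <= a)%nat ->
  0 <= fst (wcost δ (k, a, b, c)) /\ 0 <= snd (wcost δ (k, a, b, c)) /\
  Z.of_nat k <= fst (wcost δ (k, a, b, c)) + snd (wcost δ (k, a, b, c)) /\
  Z.of_nat (a + b + c) <= fst (wcost δ (k, a, b, c)) + snd (wcost δ (k, a, b, c)).
Proof.
  intros Hδ Ha. rewrite wcost_delta, <- wlist_cost. cbn [fst snd].
  assert (Hk : In k (wlist (k, a, b, c))).
  { cbn. apply in_or_app. left. destruct a; [lia|left; reflexivity]. }
  pose proof (index_cost_le _ _ Hk). pose proof (cost_total_ge k).
  pose proof (cost_nonneg k). pose proof (cost_nonneg_sum (wlist (k, a, b, c))).
  pose proof (length_le_cost (wlist (k, a, b, c))). rewrite wlist_length in *. cbn in *. nia.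
Qed.

Definition peqb (p q : Z * Z) : bool := (fst p =? fst q) && (snd p =? snd q).

Lemma peqb_spec p q : peqb p q = true <-> p = q.
Proof.
  destruct p as [x y], q as [x' y']. unfold peqb. cbn.
  rewrite Bool.andb_true_iff, !Z.eqb_eq. split; [intros [-> ->]; reflexivity|].
  intros E. now injection E.
Qed.

Definition ind (b : bool) : Z := if b then 1 else 0.

Ltac zcase :=
  repeat (match goal with
          | |- context [Z.leb ?x ?y] => destruct (Z.leb_spec x y)
          | |- context [Z.ltb ?x ?y] => destruct (Z.ltb_spec x y)
          | |- context [Z.eqb ?x ?y] => destruct (Z.eqb_spec x y)
          end; cbn [andb orb negb ind]; try (exfalso; lia)).

Lemma wcost_raise δ k a b c : wcost δ (S k, a, b, c) = up (wcost δ (k, a, b, c)).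
Proof. apply Nat.iter_succ. Qed.

Lemma unup_up p : unup (up p) = p.
Proof. destruct p as [x y]. unfold unup, up. cbn. f_equal; ring. Qed.

Lemma up_unup p : up (unup p) = p.
Proof. destruct p as [x y]. unfold unup, up. cbn. f_equal; ring. Qed.

Section Fibres.
Variables (B s : nat) (δ : Z).
Hypothesis δ_nonneg : 0 <= δ.

Definition fibre (V : Z * Z) : nat :=
  length (filter (fun w => (wsize w =? s)%nat && peqb (wcost δ w) V) (universe B)).

Lemma fibre_out V : fst V < 0 \/ snd V < 0 \/ V = (0, 0) -> fibre V = 0%nat.
Proof.
  intros HV. apply count_zero. intros [[[k a] b] c] Hw.
  destruct (peqb _ V) eqn:E; [|apply Bool.andb_false_r].
  apply peqb_spec in E. apply in_universe in Hw.
  destruct (wcost_bounds δ k a b c δ_nonneg ltac:(lia)) as (H1 & H2 & _ & H4).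
  rewrite E in H1, H2, H4. destruct HV as [HV|[HV| ->]]; cbn in *; lia.
Qed.

Lemma fibre_raised V : fst V + snd V <= Z.of_nat B ->
  length (filter (fun w => ((wsize w =? s)%nat && peqb (wcost δ w) V) &&
                           negb (wlevel w =? 0)%nat) (universe B)) = fibre (unup V).
Proof.
  intros HB. symmetry. unfold fibre.
  apply (count_bij (fun w => let '(k, a, b, c) := w in (S k, a, b, c)));
    try apply universe_NoDup.
  - intros [[[k a] b] c] [[[k' a'] b'] c'] _ _ _ _ E. now injection E as -> -> -> ->.
  - intros [[[k a] b] c] Hw P. apply Bool.andb_true_iff in P as [P1 P2].
    apply peqb_spec in P2. apply in_universe in Hw.
    assert (E : wcost δ (S k, a, b, c) = V) by (rewrite wcost_raise, P2; apply up_unup).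
    destruct (wcost_bounds δ (S k) a b c δ_nonneg ltac:(lia)) as (_ & _ & Bk & _).
    rewrite E in Bk. split; [apply in_universe; lia|].
    cbn [wsize wlevel] in *. rewrite P1, E, (proj2 (peqb_spec V V) eq_refl). reflexivity.
  - intros [[[k a] b] c] Hw Q. apply Bool.andb_true_iff in Q as [Q1 Q3].
    apply Bool.andb_true_iff in Q1 as [Q1 Q2]. apply peqb_spec in Q2.
    destruct k as [|k]; [discriminate|]. apply in_universe in Hw.
    exists (k, a, b, c). split; [apply in_universe; lia|]. split; [|reflexivity].
    cbn [wsize] in *. rewrite Q1. apply peqb_spec.
    rewrite <- Q2, wcost_raise, unup_up. reflexivity.
Qed.

(* At level 0 the cost [(a + c, b + c + δ)] and the size [s] determine the
   window, which exists exactly when the indicated inequalities hold. *)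
Lemma fibre_level0 V : 0 <= fst V -> 0 <= snd V -> fst V + snd V <= Z.of_nat B ->
  Z.of_nat (length (filter (fun w => ((wsize w =? s)%nat && peqb (wcost δ w) V) &&
                                     (wlevel w =? 0)%nat) (universe B))) =
  ind ((fst V <=? Z.of_nat s) && (snd V - δ + 1 <=? Z.of_nat s) &&
       (Z.of_nat s <=? fst V + snd V - δ)).
Proof.
  destruct V as [v1 v2]. cbn [fst snd]. intros H1 H2 HB.
  assert (Sol : forall k a b c, wcost δ (k, a, b, c) = (v1, v2) -> k = 0%nat ->
            (a + b + c)%nat = s -> Z.of_nat a = Z.of_nat s - v2 + δ /\
            Z.of_nat b = Z.of_nat s - v1 /\ Z.of_nat c = v1 + v2 - δ - Z.of_nat s).
  { intros k a b c E -> Hs. cbn in E. injection E. lia. }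
  destruct ((v1 <=? Z.of_nat s) && (v2 - δ + 1 <=? Z.of_nat s) &&
            (Z.of_nat s <=? v1 + v2 - δ)) eqn:C.
  - apply Bool.andb_true_iff in C as [C C3]. apply Bool.andb_true_iff in C as [C1 C2].
    apply Z.leb_le in C1, C2, C3.
    rewrite (count_one _ _ (0%nat, Z.to_nat (Z.of_nat s - v2 + δ), Z.to_nat (Z.of_nat s - v1),
                           Z.to_nat (v1 + v2 - δ - Z.of_nat s))); [reflexivity|..].
    + apply universe_NoDup.
    + apply in_universe. lia.
    + cbn. rewrite Bool.andb_true_r. apply Bool.andb_true_iff. split.
      * apply Nat.eqb_eq. lia.
      * apply peqb_spec. f_equal; lia.
    + intros [[[k a] b] c] _ P. apply Bool.andb_true_iff in P as [P P3].
      apply Bool.andb_true_iff in P as [P1 P2]. apply peqb_spec in P2.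
      apply Nat.eqb_eq in P1, P3. cbn [wsize wlevel] in P1, P3.
      destruct (Sol k a b c P2 P3 P1) as (Ea & Eb & Ec). subst k. repeat f_equal; lia.
  - rewrite count_zero; [reflexivity|]. intros [[[k a] b] c] Hw. apply in_universe in Hw.
    destruct ((wsize _ =? s)%nat && _ && _) eqn:P; [|reflexivity].
    apply Bool.andb_true_iff in P as [P P3].
    apply Bool.andb_true_iff in P as [P1 P2]. apply peqb_spec in P2.
    apply Nat.eqb_eq in P1, P3. cbn [wsize wlevel] in P1, P3.
    destruct (Sol k a b c P2 P3 P1) as (Ea & Eb & Ec).
    assert (T : (v1 <=? Z.of_nat s) && (v2 - δ + 1 <=? Z.of_nat s) &&
                (Z.of_nat s <=? v1 + v2 - δ) = true)
      by (rewrite !Bool.andb_true_iff, !Z.leb_le; lia).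
    congruence.
Qed.

Lemma fibre_rec V : 0 <= fst V -> 0 <= snd V -> fst V + snd V <= Z.of_nat B ->
  Z.of_nat (fibre V) =
  ind ((fst V <=? Z.of_nat s) && (snd V - δ + 1 <=? Z.of_nat s) &&
       (Z.of_nat s <=? fst V + snd V - δ)) + Z.of_nat (fibre (unup V)).
Proof.
  intros H1 H2 HB. rewrite <- fibre_level0, <- fibre_raised by assumption.
  unfold fibre. rewrite (count_split _ (fun w => (wlevel w =? 0)%nat)). lia.
Qed.

End Fibres.

(* The value of [fibre 0 V - fibre 2 V] (windows of size [s] of cost [V]
   minus windows of size [s] whose split has cost [V]), see
   [fibre_difference]: it is supported on the lines [v1 + v2 = s] and
   [v1 + v2 = s + 1]. *)
Definition excess (s : nat) (V : Z * Z) : Z :=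
  if (fst V =? 0) && (snd V =? 0) then 0
  else ind (Z.of_nat s =? fst V + snd V) +
       ind ((1 <=? fst V) && (1 <=? snd V) && (Z.of_nat s =? fst V + snd V - 1)).

(* Local identity, by induction along [unup], which decreases [v1 + v2]
   until the quadrant is left. *)
Lemma fibre_difference B s V : 0 <= fst V -> 0 <= snd V -> fst V + snd V <= Z.of_nat B ->
  Z.of_nat (fibre B s 0 V) - Z.of_nat (fibre B s 2 V) = excess s V.
Proof.
  assert (Rec := fun V => fibre_rec B s 0 ltac:(lia) V).
  assert (Rec2 := fun V => fibre_rec B s 2 ltac:(lia) V).
  assert (Out := fun V => fibre_out B s 0 ltac:(lia) V).
  assert (Out2 := fun V => fibre_out B s 2 ltac:(lia) V).
  remember (Z.to_nat (fst V + snd V)) as n eqn:Hn. revert V Hn.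
  induction n as [n IH] using lt_wf_ind. intros [v1 v2] Hn H1 H2 HB; cbn [fst snd] in *.
  destruct (Z.eq_dec v1 0) as [->|Hv1]; [destruct (Z.eq_dec v2 0) as [->|Hv2]|].
  - rewrite Out, Out2 by auto. reflexivity.
  - (* [unup] twice leaves the quadrant *)
    rewrite Rec, Rec2 by (cbn; lia). unfold unup; cbn [fst snd].
    rewrite Rec, Rec2 by (cbn; lia). unfold unup; cbn [fst snd].
    rewrite Out, Out2 by (cbn; lia). unfold excess; cbn [fst snd]. zcase; lia.
  - rewrite Rec, Rec2 by (cbn; lia). unfold unup; cbn [fst snd].
    destruct (Z_lt_le_dec (v2 - v1) 0) as [Hl|Hl].
    + rewrite Out, Out2 by (cbn; lia). unfold excess; cbn [fst snd]. zcase; lia.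
    + assert (E := IH (Z.to_nat (v2 - v1 + v1)) ltac:(lia) (v2 - v1, v1) eq_refl).
      cbn [fst snd] in E. specialize (E ltac:(lia) ltac:(lia) ltac:(lia)).
      unfold excess in *; cbn [fst snd] in *. revert E. zcase; lia.
Qed.

Fixpoint zsumn (n : nat) (F : nat -> Z) : Z :=
  match n with O => 0 | S n' => zsumn n' F + F n' end.

Lemma zsumn_S n F : zsumn (S n) F = zsumn n F + F n.
Proof. reflexivity. Qed.

Lemma zsumn_ext n F G : (forall i, (i < n)%nat -> F i = G i) -> zsumn n F = zsumn n G.
Proof.
  induction n as [|n IH]; intros H; cbn; [reflexivity|].
  rewrite IH, H; [reflexivity|lia|intros i Hi; apply H; lia].
Qed.

Lemma zsumn_add n F G : zsumn n (fun i => F i + G i) = zsumn n F + zsumn n G.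
Proof. induction n as [|n IH]; cbn; lia. Qed.

Lemma zsumn_sub n F G : zsumn n (fun i => F i - G i) = zsumn n F - zsumn n G.
Proof. induction n as [|n IH]; cbn; lia. Qed.

Lemma zsumn_scale n c F : zsumn n (fun i => c * F i) = c * zsumn n F.
Proof. induction n as [|n IH]; cbn; lia. Qed.

Lemma zsumn_indicator n x :
  zsumn n (fun i => ind (x =? Z.of_nat i)) = ind ((0 <=? x) && (x <? Z.of_nat n)).
Proof.
  induction n as [|n IH]; cbn [zsumn]; [unfold ind; zcase; reflexivity|].
  rewrite IH. unfold ind. zcase; lia.
Qed.

Lemma count_cons {A : Type} (P : A -> bool) x l :
  Z.of_nat (length (filter P (x :: l))) = ind (P x) + Z.of_nat (length (filter P l)).
Proof. cbn. destruct (P x); cbn [length ind]; lia. Qed.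

Definition inboxb (d1 d2 : nat) (p : Z * Z) : bool :=
  (0 <=? fst p) && (fst p <=? Z.of_nat d1) && (0 <=? snd p) && (snd p <=? Z.of_nat d2).

Lemma count_box {A : Type} (P : A -> bool) (g : A -> Z * Z) (l : list A) d1 d2 :
  Z.of_nat (length (filter (fun x => P x && inboxb d1 d2 (g x)) l)) =
  zsumn (S d2) (fun j => zsumn (S d1) (fun i =>
    Z.of_nat (length (filter (fun x => P x && peqb (g x) (Z.of_nat i, Z.of_nat j)) l)))).
Proof.
  induction l as [|x l IH].
  - cbn [filter length]. rewrite (zsumn_ext _ _ (fun _ => 0 * 0)).
    + rewrite zsumn_scale. lia.
    + intros j _. rewrite (zsumn_ext _ _ (fun _ => 0 * 0)); [rewrite zsumn_scale; lia|reflexivity].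
  - rewrite count_cons, IH. symmetry.
    rewrite (zsumn_ext _ _ (fun j => ind (P x && (snd (g x) =? Z.of_nat j)) *
               zsumn (S d1) (fun i => ind (fst (g x) =? Z.of_nat i)) +
               zsumn (S d1) (fun i => Z.of_nat (length (filter (fun y =>
                   P y && peqb (g y) (Z.of_nat i, Z.of_nat j)) l))))).
    + rewrite zsumn_add, zsumn_indicator.
      rewrite (zsumn_ext _ _ (fun j => ind (P x && ((0 <=? fst (g x)) &&
                 (fst (g x) <? Z.of_nat (S d1)))) * ind (snd (g x) =? Z.of_nat j))).
      * rewrite zsumn_scale, zsumn_indicator. unfold inboxb.
        destruct (P x); cbn [andb]; unfold ind; zcase; lia.
      * intros j _. unfold ind. destruct (P x); cbn [andb]; zcase; lia.
    + intros j _. rewrite <- zsumn_scale, <- zsumn_add. apply zsumn_ext. intros i _.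
      rewrite count_cons. unfold peqb. cbn [fst snd].
      unfold ind. destruct (P x); cbn [andb]; zcase; lia.
Qed.

Definition row_excess (s : nat) (e j : Z) : Z :=
  if j =? 0 then ind ((1 <=? Z.of_nat s) && (Z.of_nat s <? e))
  else ind ((j <=? Z.of_nat s) && (Z.of_nat s <? j + e)) +
       ind ((j <=? Z.of_nat s) && (Z.of_nat s <? j + e - 1)).

Lemma row_sum s e j : 0 <= j ->
  zsumn e (fun i => excess s (Z.of_nat i, j)) = row_excess s (Z.of_nat e) j.
Proof.
  intros Hj. induction e as [|e IH]; cbn [zsumn]; [unfold row_excess, ind; zcase; lia|].
  rewrite IH. unfold row_excess, excess. cbn [fst snd]. zcase; lia.
Qed.

(* Summing [excess] over the box gives [χ(s)], except for the point
   [(0, 0)] which is not the value of any window. *)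
Lemma box_excess d1 d2 s :
  zsumn (S d2) (fun j => zsumn (S d1) (fun i => excess s (Z.of_nat i, Z.of_nat j))) =
  Z.of_nat (chi_formula d1 d2 s) - ind (Z.of_nat s =? 0).
Proof.
  rewrite (zsumn_ext _ _ (fun j => row_excess s (Z.of_nat (S d1)) (Z.of_nat j)))
    by (intros; apply row_sum; lia).
  unfold chi_formula. induction d2 as [|d2 IH].
  - cbn [zsumn]. destruct (Nat.leb_spec s (d1 + 0)); unfold row_excess, ind; zcase; lia.
  - rewrite zsumn_S, IH. destruct (Nat.leb_spec s (d1 + d2)), (Nat.leb_spec s (d1 + S d2));
      unfold row_excess, ind; zcase; lia.
Qed.

Section Maximal.
Variables d1 d2 s : nat.

Definition maxb (w : window) : bool :=
  (wsize w =? s)%nat && inboxb d1 d2 (wcost 0 w) && negb (inboxb d1 d2 (wcost 2 w)).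

Lemma inboxb_ple p : 0 <= fst p -> 0 <= snd p -> inboxb d1 d2 p = true <-> ple p (D d1 d2).
Proof.
  destruct p as [x y]. unfold inboxb, ple, D. cbn. intros.
  rewrite !Bool.andb_true_iff, !Z.leb_le. lia.
Qed.

Lemma maxb_spec w : In w (universe (d1 + d2)) /\ maxb w = true <-> maximal d1 d2 s w.
Proof.
  destruct w as [[[k a] b] c]. unfold maxb, maximal. rewrite in_universe.
  rewrite !Bool.andb_true_iff, Bool.negb_true_iff, Nat.eqb_eq. cbn [wsize].
  split.
  - intros (Hw & (Hs & C0) & C2).
    destruct (wcost_bounds 0 k a b c ltac:(lia) ltac:(lia)) as (P1 & P2 & _).
    destruct (wcost_bounds 2 k a b c ltac:(lia) ltac:(lia)) as (P3 & P4 & _).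
    rewrite <- inboxb_ple by assumption. repeat split; auto; [lia|].
    rewrite <- inboxb_ple by assumption. congruence.
  - intros (Ha & Hs & C0 & C2).
    destruct (wcost_bounds 0 k a b c ltac:(lia) ltac:(lia)) as (P1 & P2 & Bk & Bs).
    destruct (wcost_bounds 2 k a b c ltac:(lia) ltac:(lia)) as (P3 & P4 & _).
    assert (C0' := C0). destruct C0' as [C0a C0b]. unfold D in C0a, C0b.
    cbn [fst snd] in C0a, C0b.
    split; [lia|]. split; [split; [exact Hs|apply inboxb_ple; auto]|].
    destruct (inboxb d1 d2 (wcost 2 (k, a, b, c))) eqn:E; [|reflexivity].
    apply inboxb_ple in E; tauto.
Qed.

(* The number of maximal windows of size [s] is the sum of [excess] over
   the box: windows inside the box minus windows whose split is inside. *)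
Lemma maximal_count :
  Z.of_nat (length (filter maxb (universe (d1 + d2)))) =
  Z.of_nat (chi_formula d1 d2 s) - ind (Z.of_nat s =? 0).
Proof.
  set (U := universe (d1 + d2)).
  assert (Split : forall δ, Z.of_nat (length (filter (fun w =>
                     (wsize w =? s)%nat && inboxb d1 d2 (wcost δ w)) U)) =
                  zsumn (S d2) (fun j => zsumn (S d1) (fun i =>
                     Z.of_nat (fibre (d1 + d2) s δ (Z.of_nat i, Z.of_nat j)))))
    by (intros δ; exact (count_box (fun w => (wsize w =? s)%nat) (wcost δ) U d1 d2)).
  rewrite (count_ext maxb (fun w => ((wsize w =? s)%nat && inboxb d1 d2 (wcost 0 w)) &&
             negb ((wsize w =? s)%nat && inboxb d1 d2 (wcost 2 w))))
    by (intros w _; unfold maxb; destruct (wsize w =? s)%nat; reflexivity).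
  rewrite count_diff, !Split, <- zsumn_sub, <- box_excess.
  - apply zsumn_ext. intros j Hj. rewrite <- zsumn_sub. apply zsumn_ext. intros i Hi.
    apply fibre_difference; cbn; lia.
  -
    intros [[[k a] b] c] Hw. apply in_universe in Hw.
    rewrite !Bool.andb_true_iff. intros [Hs C2]. split; [exact Hs|].
    destruct (wcost_bounds 0 k a b c ltac:(lia) ltac:(lia)) as (P1 & P2 & _).
    destruct (wcost_bounds 2 k a b c ltac:(lia) ltac:(lia)) as (P3 & P4 & _).
    apply inboxb_ple in C2; auto. apply inboxb_ple; auto.
    eapply ple_trans; [|exact C2]. rewrite (wcost_delta 2). unfold ple. cbn [fst snd].
    pose proof (cost_nonneg k). lia.
Qed.

Lemma maximal_values_NoDup : NoDup (map wvalue (filter maxb (universe (d1 + d2)))).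
Proof.
  apply NoDup_map_NoDup_ForallPairs; [|apply NoDup_filter, universe_NoDup].
  intros [[[k a] b] c] [[[k' a'] b'] c'] H1 H2 E.
  apply filter_In, maxb_spec in H1 as (Ha & Hs1 & _), H2 as (Ha' & Hs2 & _).
  destruct (window_unique k a b c k' a' b' c' Ha Ha' E ltac:(lia)) as (-> & -> & -> & ->).
  reflexivity.
Qed.

Lemma no_maximal_of_size0 : s = 0%nat -> filter maxb (universe (d1 + d2)) = [].
Proof.
  intros Hs. destruct (filter maxb _) as [|w l] eqn:E; [reflexivity|exfalso].
  assert (Hw : In w (filter maxb (universe (d1 + d2)))) by (rewrite E; left; reflexivity).
  apply filter_In, maxb_spec in Hw. destruct w as [[[k a] b] c]. cbn in Hw. lia.
Qed.

End Maximal.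

Theorem mainTheorem2 (d1 d2 s : nat) :
  has_card (max_admits d1 d2 s) (chi_formula d1 d2 s).
Proof.
  set (WL := filter (maxb d1 d2 s) (universe (d1 + d2))).
  assert (InWL : forall w, In w WL <-> maximal d1 d2 s w)
    by (intros w; unfold WL; rewrite filter_In; apply maxb_spec).
  assert (Count := maximal_count d1 d2 s). fold WL in Count.
  exists (map wvalue WL ++ (if (s =? 0)%nat then [(0, 0)] else [])). split; [|split].
  - destruct (Nat.eqb_spec s 0) as [Hs|Hs].
    + unfold WL. rewrite no_maximal_of_size0 by exact Hs. repeat constructor. intros [].
    + rewrite app_nil_r. apply maximal_values_NoDup.
  - intros p. rewrite max_admits_window, in_app_iff, in_map_iff. split.
    + intros [(w & <- & Hw)|H]; [right; exists w; split; [apply InWL, Hw|reflexivity]|].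
      destruct (Nat.eqb_spec s 0) as [->|]; [|destruct H].
      destruct H as [<-|[]]. left. auto.
    + intros [[-> ->]|(w & Hw & <-)]; [right; left; reflexivity|].
      left. exists w. split; [reflexivity|apply InWL, Hw].
  - rewrite length_app, length_map.
    destruct (Nat.eqb_spec s 0) as [->|Hs]; cbn [length]; revert Count; unfold ind; zcase; lia.
Qed.
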